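(* Consider the Neutralization-Based Reclamation (NBR) scheme described in the context. Let $T_r$ be a reclaiming thread and $T_w$ another thread. If $T_w$ enters its write phase (i.e. performs the sequentially consistent store of false to its restartable flag, after having written its reservations) before it is signalled by $T_r$, then $T_r$, when it subsequently scans the reservation slots of $T_w$, is guaranteed to read all the reservations that $T_w$ made before entering its write phase.
   Context: Setting: an asynchronous shared-memory system with a fixed set of threads operating on a linked concurrent data structure whose nodes are reached from a fixed set of entry points. NBR (Neutralization-Based Reclamation) works as follows. Each thread has a private limbo bag of retired nodes, a thread-local atomic boolean flag restartable, and a row of a shared single-writer multi-reader array reservations (at most $r$ slots per thread). Each data structure operation consists of an optional preamble (no access to shared nodes), then one or more read phases each followed by a write phase. Immediately before a read phase the thread sets a checkpoint (via sigsetjmp); at the beginning of a read phase it clears its reservations and then stores true into restartable (sequentially consistent store); during a read phase it only reads, and only shared nodes discovered within that phase starting from an entry point. To end a read phase and enter the write phase, the thread writes pointers to all shared nodes it will access in the write phase into its reservation slots and then stores false into restartable (sequentially consistent store); in the write phase it accesses only reserved nodes. On receipt of a neutralizing signal a thread runs a handler: if restartable is false it returns and continues; otherwise it jumps back (siglongjmp) to its last checkpoint, discarding all private references obtained in the read phase. A thread retires an unlinked node by appending it to its limbo bag; when the limbo bag exceeds a predetermined size threshold, the thread (a reclaimer) first sends a neutralizing signal to every other thread, then scans the reservations of all threads, then frees every node in its limbo bag that is not reserved. Assumption: if a thread $T_i$ sends a signal to $T_j$, then by the time $T_i$ finishes sending it, $T_j$ has received it and will execute the signal handler before taking any further step of its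 program. *)

From Stdlib Require Import Relations.

Definition Thread := nat.
Definition Slot := nat.
(* pointers to shared nodes; 0 can play the role of "null / cleared" *)
Definition Ptr := nat.

(* A location of the reservations array: row [owner], column [slot]. *)
Definition Loc : Type := (Thread * Slot)%type.

Inductive Action : Type :=
  | WriteRes (slot : Slot) (p : Ptr)            (* write p into own reservation slot *)
  | ReadRes (owner : Thread) (slot : Slot) (p : Ptr)
  | StoreRestartable (b : bool)                (* seq-cst store of b into own restartable flag *)
  | SignalSend (target : Thread)               (* completion of sending a neutralizing signal *)
  | SignalRecv (sender : Thread)
  | Other.

Record Execution : Type := {
  Event : Type;
  tid : Event -> Thread;
  act : Event -> Action;
  po : Event -> Event -> Prop;
  rf : Event -> Event -> Prop;          (* rf w r : read r reads from write w *)
  mo : Event -> Event -> Prop;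
  sig : Event -> Event -> Prop          (* sig rv sd : rv is the receipt of the signal sent by sd *)
}.

(* The location written by an event (reservation writes only). Each thread
   writes only its own row (single-writer). *)
Definition write_loc (X : Execution) (e : Event X) : option Loc :=
  match act X e with
  | WriteRes k _ => Some (tid X e, k)
  | _ => None
  end.

Definition write_val (X : Execution) (e : Event X) : option Ptr :=
  match act X e with
  | WriteRes _ p => Some p
  | _ => None
  end.

Definition read_loc (X : Execution) (e : Event X) : option Loc :=
  match act X e with
  | ReadRes o k _ => Some (o, k)
  | _ => None
  end.

Definition read_val (X : Execution) (e : Event X) : option Ptr :=
  match act X e with
  | ReadRes _ _ p => Some p
  | _ => None
  end.

Definition is_write (X : Execution) (e : Event X) : Prop := write_loc X e <> None.

(* Happens-before: transitive closure of program order and of the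
   synchronisation induced by the signalling assumption: by the time the
   sender finishes sending, the target has received the signal, i.e. the
   receipt happens before the completion of the send. *)
Definition hb (X : Execution) : relation (Event X) :=
  clos_trans (Event X) (fun a b => po X a b \/ sig X a b).

Record consistent (X : Execution) : Prop := {
  po_same_thread : forall a b, po X a b -> tid X a = tid X b;
  po_trans : forall a b c, po X a b -> po X b c -> po X a c;
  po_irrefl : forall a, ~ po X a a;
  sig_wf : forall rv sd, sig X rv sd ->
      act X sd = SignalSend (tid X rv) /\ act X rv = SignalRecv (tid X sd);
  sig_total : forall sd j, act X sd = SignalSend j ->
      exists rv, sig X rv sd;
  rf_wf : forall w r, rf X w r ->
      write_loc X w = read_loc X r /\ write_loc X w <> None /\
      write_val X w = read_val X r;
  (* every read reads from some write (initial values are modelled as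
     initialising write events) *)
  rf_total : forall r, read_loc X r <> None -> exists w, rf X w r;
  mo_wf : forall a b, mo X a b -> is_write X a /\ write_loc X a = write_loc X b;
  mo_trans : forall a b c, mo X a b -> mo X b c -> mo X a c;
  mo_irrefl : forall a, ~ mo X a a;
  mo_total : forall a b, is_write X a -> write_loc X a = write_loc X b ->
      a = b \/ mo X a b \/ mo X b a;
  coWW : forall a b, is_write X a -> write_loc X a = write_loc X b ->
      hb X a b -> mo X a b;
  coWR : forall w w' r, rf X w r -> hb X w' r -> mo X w w' -> False;
  hb_irrefl : forall a, ~ hb X a a
}.

(* The reservation write, the store to restartable, the receipt and the
   send of the signal, and the scan form a happens-before chain from the
   reservation to the scan, because the signal is received before its send
   completes.  Write-read coherence then forbids the scan from reading any
   write to the slot that is modification-ordered before the reservation. *)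
From Stdlib Require Import Relations.

Section Coherence.

Variable X : Execution.
Hypothesis HX : consistent X.

Lemma hb_po (a b : Event X) : po X a b -> hb X a b.
Proof. intro Hab. apply t_step. left. exact Hab. Qed.

Lemma hb_sig (rv sd : Event X) : sig X rv sd -> hb X rv sd.
Proof. intro Hsig. apply t_step. right. exact Hsig. Qed.

Lemma hb_through_signal (a rv sd b : Event X) :
  po X a rv -> sig X rv sd -> po X sd b -> hb X a b.
Proof.
  intros Hpre Hsig Hpost.
  apply t_trans with rv; [apply hb_po; exact Hpre|].
  apply t_trans with sd; [apply hb_sig; exact Hsig|].
  apply hb_po; exact Hpost.
Qed.

Lemma rf_hb_write_mo (w' w r : Event X) :
  is_write X w' -> write_loc X w' = read_loc X r -> hb X w' r ->
  rf X w r -> w = w' \/ mo X w' w.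
Proof.
  intros Hw' Hloc Hhb Hrf.
  destruct (rf_wf X HX w r Hrf) as [Hlw _].
  destruct (mo_total X HX w' w Hw') as [Heq | [Hmo | Hmo]].
  - congruence.
  - left. symmetry. exact Heq.
  - right. exact Hmo.
  - exfalso. exact (coWR X HX w w' r Hrf Hhb Hmo).
Qed.

End Coherence.

Lemma write_loc_WriteRes (X : Execution) (e : Event X) (k : Slot) (p : Ptr) :
  act X e = WriteRes k p -> write_loc X e = Some (tid X e, k).
Proof. intro Ha. unfold write_loc. rewrite Ha. reflexivity. Qed.

Lemma read_loc_ReadRes (X : Execution) (e : Event X) (o : Thread) (k : Slot) (q : Ptr) :
  act X e = ReadRes o k q -> read_loc X e = Some (o, k).
Proof. intro Ha. unfold read_loc. rewrite Ha. reflexivity. Qed.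

Theorem lemma5 (X : Execution) (HX : consistent X) (Tr Tw : Thread) (k : Slot) (p : Ptr)
    (wr st rv sd rd : Event X) :
  Tr <> Tw ->
  tid X wr = Tw -> act X wr = WriteRes k p ->
  tid X st = Tw -> act X st = StoreRestartable false ->
  po X wr st ->
  tid X sd = Tr -> act X sd = SignalSend Tw ->
  sig X rv sd ->
  po X st rv ->
  tid X rd = Tr -> (exists q, act X rd = ReadRes Tw k q) ->
  po X sd rd ->
  forall w, rf X w rd -> w = wr \/ mo X wr w.
Proof.
  intros _ Htid_wr Hact_wr _ _ Hpo_wr_st _ _ Hsig Hpo_st_rv _ [q Hact_rd] Hpo_sd_rd w Hrf.
  assert (Hloc_wr : write_loc X wr = Some (Tw, k)).
  { rewrite <- Htid_wr. exact (write_loc_WriteRes X wr k p Hact_wr). }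
  apply (rf_hb_write_mo X HX wr w rd).
  - unfold is_write. rewrite Hloc_wr. discriminate.
  - rewrite Hloc_wr. symmetry. exact (read_loc_ReadRes X rd Tw k q Hact_rd).
  - apply t_trans with st; [apply hb_po; exact Hpo_wr_st|].
    exact (hb_through_signal X st rv sd rd Hpo_st_rv Hsig Hpo_sd_rd).
  - exact Hrf.
Qed.
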